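(* Fix parameters $T$ and $K$ with $T>K$, and let $\mathrm{INST}$ be a streaming multi-armed bandit instance with $K$ arms. Let $\mathrm{ALG}$ be a single-pass streaming algorithm that, given a parameter $\varepsilon$, uses memory $S$ and $\frac{M}{\varepsilon^2}$ arm pulls and returns an arm $\mathsf{arm}_{\mathrm{ALG}(\mathrm{INST})}$ with mean reward $\mu_{\mathrm{ALG}(\mathrm{INST})}$ such that \[\Pr\left(\mu_{\mathrm{ALG}(\mathrm{INST})}<\mu^*-c\cdot\varepsilon\right)\leq \left(\tfrac{1}{2}\right)^{c}\cdot\frac{1}{10}\] for every integer $c\geq 1$. Then there exists a streaming algorithm with memory $S$ that performs $T$ arm pulls with expected regret \[\mathbb{E}[R_T]\leq O\left(M\cdot\frac{T^{2/3}}{K^{2/3}}+K^{1/3}T^{2/3}\right).\]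
   Context: Single-pass streaming multi-armed bandits: there are $K$ arms, each with an unknown reward distribution (supported on $[0,1]$) with mean $\mu_i$; $\mu^*=\max_i\mu_i$. The arms arrive one by one in a stream in an arbitrary order. The algorithm may only pull arms currently stored in its memory (including the arm currently being read); once an arm is not stored or is discarded, it can never be retrieved. Memory $S$ means at most $S$ arms are stored at any time. The algorithm performs $T$ arm pulls in total; if $a_1,\dots,a_T$ are the arms pulled, the regret is $R_T=T\mu^*-\sum_{s=1}^T\mu_{a_s}$ and $\mathbb{E}[R_T]$ is its expectation. The $O(\cdot)$ hides an absolute constant. *)

From HB Require Import structures.
From mathcomp Require Import all_boot all_order all_algebra.
From mathcomp Require Import all_classical all_reals all_analysis.
Set Implicit Arguments. Unset Strict Implicit. Unset Printing Implicit Defensive.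
Import Order.TTheory GRing.Theory Num.Theory.
Local Open Scope classical_set_scope.
Local Open Scope ring_scope.

(* Arms are identified by their arrival position 0, 1, ..., K-1 in the *)
(* stream (an arbitrary order = an arbitrary tuple of distributions).  *)

Inductive action :=
  | APull of nat
  | ADiscard of nat
  | ARead             (* read the next arm of the stream into memory *)
  | AStop of nat.

(* A (randomized) algorithm: given its random seed u and the history of
   its actions (with the observed reward for pulls, 0 otherwise), it
   chooses the next action. *)
Definition policy (R : realType) := R -> seq (action * R) -> action.

Record state (R : realType) := State {
  st_mem : seq nat;              (* arms currently stored (incl. the one being read) *)
  st_pos : nat;
  st_cnt : nat -> nat;
  st_hist : seq (action * R) }.

Inductive outcome (R : realType) :=
  | Done of nat & seq (action * R)
  | Fail                            (* illegal action *)
  | OutOfFuel.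

Definition init_state (R : realType) : state R := State [::] 0 (fun _ => 0%N) [::].

(* Execution with [n] steps of fuel; [x i j] is the reward obtained at the
   j-th pull (counting from 0) of arm i. Memory S: at most S arms stored
   at any time, the arm being read included. *)
Fixpoint exec (R : realType) (K S : nat) (pol : policy R) (u : R)
    (x : nat -> nat -> R) (n : nat) (st : state R) : outcome R :=
  match n with
  | 0 => OutOfFuel R
  | n'.+1 =>
    match pol u (st_hist st) with
    | APull a =>
        if a \in st_mem st then
          exec K S pol u x n'
            (State (st_mem st) (st_pos st)
               (fun b => if b == a then (st_cnt st a).+1 else st_cnt st b)
               (rcons (st_hist st) (APull a, x a (st_cnt st a))))
        else Fail R
    | ADiscard a =>
        if a \in st_mem st then
          exec K S pol u x n'
            (State (rem a (st_mem st)) (st_pos st) (st_cnt st)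
               (rcons (st_hist st) (ADiscard a, 0)))
        else Fail R
    | ARead =>
        if (st_pos st < K)%N && (size (st_mem st) < S)%N then
          exec K S pol u x n'
            (State (rcons (st_mem st) (st_pos st)) (st_pos st).+1 (st_cnt st)
               (rcons (st_hist st) (ARead, 0)))
        else Fail R
    | AStop a => if a \in st_mem st then Done a (st_hist st) else Fail R
    end
  end.

Definition result (R : realType) (K S : nat) (pol : policy R) (u : R)
    (x : nat -> nat -> R) : outcome R :=
  match pselect (exists n a h, exec K S pol u x n (init_state R) = Done a h) with
  | left e => exec K S pol u x (proj1_sig (cid e)) (init_state R)
  | right _ => Fail R
  end.

Definition pulls (R : realType) (h : seq (action * R)) : seq nat :=
  pmap (fun p => if p.1 is APull a then Some a else None) h.

Definition valid_alg (R : realType) (K S : nat) (pol : policy R)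
    (okpulls : nat -> Prop) : Prop :=
  forall (u : R) (x : nat -> nat -> R), 0 <= u <= 1 ->
    (forall i j, 0 <= x i j <= 1) ->
    exists a h, result K S pol u x = Done a h /\ okpulls (size (pulls h)).

Definition mean (R : realType) (D : probability R R) : R :=
  fine (\int[D]_x (x%:E))%E.

Definition mustar (R : realType) (K : nat) (D : nat -> probability R R) : R :=
  \big[Num.max/0]_(i < K) mean (D i).

(* A probabilistic realization of the instance (D_0, ..., D_{K-1}) on a
   probability space: X i j = reward of the j-th pull of arm i, U = random
   seed of the algorithm. All X i j (i < K) and U are mutually independent,
   X i j has law D i, and U is uniform on [0,1]. *)
Definition bandit_model (R : realType) (d : measure_display)
    (Omega : measurableType d) (P : probability Omega R) (K : nat)
    (D : nat -> probability R R) (X : nat -> nat -> Omega -> R)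
    (U : Omega -> R) : Prop :=
  [/\ (forall i j, measurable_fun setT (X i j)),
      measurable_fun setT U,
      (forall i j w, 0 <= X i j w <= 1),
      (forall w, 0 <= U w <= 1)
    & forall (F : seq (nat * nat)) (B : nat * nat -> set R) (A : set R),
        uniq F -> all (fun p => (p.1 < K)%N) F ->
        measurable A -> (forall p, measurable (B p)) ->
        P (U @^-1` A `&` \bigcap_(p in [set q | q \in F]) (X p.1 p.2 @^-1` B p))
        = (lebesgue_measure (A `&` `[0%R, 1%R]) *
           \prod_(p <- F) D p.1 (B p))%E ].

Definition run_at (R : realType) (d : measure_display) (Omega : measurableType d)
    (K S : nat) (pol : policy R) (X : nat -> nat -> Omega -> R)
    (U : Omega -> R) (w : Omega) : outcome R :=
  result K S pol (U w) (fun i j => X i j w).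

Definition alg_measurable (R : realType) (d : measure_display)
    (Omega : measurableType d) (K S : nat) (pol : policy R)
    (X : nat -> nat -> Omega -> R) (U : Omega -> R) : Prop :=
  forall (a : nat) (s : seq nat),
    measurable [set w | exists h, run_at K S pol X U w = Done a h /\ pulls h = s].

Definition pe_guarantee (R : realType) (K S : nat) (M eps : R) (pol : policy R)
    : Prop :=
  valid_alg K S pol (fun n => n%:R <= M / eps ^+ 2) /\
  forall (d : measure_display) (Omega : measurableType d)
    (P : probability Omega R) (D : nat -> probability R R)
    (X : nat -> nat -> Omega -> R) (U : Omega -> R),
    bandit_model P K D X U ->
    alg_measurable K S pol X U /\
    forall c : nat, (1 <= c)%N ->
      (P [set w | exists a h, run_at K S pol X U w = Done a h /\
                    (mean (D a) < mustar K D - c%:R * eps)%R]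
       <= ((1 / 2) ^+ c / 10)%:E)%E.

Definition regret_at (R : realType) (d : measure_display) (Omega : measurableType d)
    (K S T : nat) (pol : policy R) (D : nat -> probability R R)
    (X : nat -> nat -> Omega -> R) (U : Omega -> R) (w : Omega) : R :=
  match run_at K S pol X U w with
  | Done _ h => T%:R * mustar K D - \sum_(a <- pulls h) mean (D a)
  | _ => 0
  end.

Definition regret_guarantee (R : realType) (K S T : nat) (B : R) (pol : policy R)
    : Prop :=
  valid_alg K S pol (fun n => n = T) /\
  forall (d : measure_display) (Omega : measurableType d)
    (P : probability Omega R) (D : nat -> probability R R)
    (X : nat -> nat -> Omega -> R) (U : Omega -> R),
    bandit_model P K D X U ->
    alg_measurable K S pol X U /\
    (\int[P]_w (regret_at K S T pol D X U w)%:E <= B%:E)%E.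

From HB Require Import structures.
From mathcomp Require Import all_boot all_order all_algebra.
From mathcomp Require Import all_classical all_reals all_analysis.
From mathcomp Require Import measurable_realfun.
From mathcomp Require Import ring lra.
Import Order.TTheory GRing.Theory Num.Theory.
Set Implicit Arguments. Unset Strict Implicit. Unset Printing Implicit Defensive.

(* Explore then commit: run ALG(eps), which makes at most M/eps^2 pulls, then
   pull the arm it returns until T pulls have been made.  An exploration pull
   costs at most 1 and a commit pull costs the gap mu^* - mu_ALG, so the regret
   is at most M/eps^2 + T E[gap].  Slicing the gap into the layers
   {gap > c eps}, the tail bound gives E[gap] <= eps (1 + sum_c 2^-c/10).
   With eps = (K/T)^(1/3) both terms are of the claimed order; if M/eps^2 > T,
   committing to the first arm already has regret at most T < M/eps^2. *)

Local Open Scope classical_set_scope.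
Local Open Scope ring_scope.

Lemma pulls_rcons (R : realType) (h : seq (action * R)) p :
  pulls (rcons h p) = pulls h ++ (if p.1 is APull a then [:: a] else [::]).
Proof. by rewrite /pulls -cats1 pmap_cat /=; case: p => [[]]. Qed.

Section Execution.
Variables (R : realType) (K S : nat).
Implicit Types (pol : policy R) (u : R) (x : nat -> nat -> R).

Lemma exec_Done_mono pol u x n m st a h : (n <= m)%N ->
  exec K S pol u x n st = Done a h -> exec K S pol u x m st = Done a h.
Proof.
elim: n m st => [|n IH] [|m] st //= lenm.
by case: (pol u (st_hist st)) => [b|b||b] //; case: ifP => // _; exact: IH.
Qed.

Lemma exec_Done_inj pol u x n m st a h a' h' :
  exec K S pol u x n st = Done a h -> exec K S pol u x m st = Done a' h' ->
  a = a' /\ h = h'.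
Proof.
move=> /(exec_Done_mono (leq_maxl n m)) E /(exec_Done_mono (leq_maxr n m)).
by rewrite E => -[-> ->].
Qed.

Lemma exec_result pol u x n a h :
  exec K S pol u x n (init_state R) = Done a h -> result K S pol u x = Done a h.
Proof.
move=> E; rewrite /result; case: pselect => [e|[]]; last by exists n, a, h.
case: (cid e) => n' /= [a' [h' E']]; rewrite E'.
by have [-> ->] := exec_Done_inj E E'.
Qed.

Lemma result_exec pol u x a h : result K S pol u x = Done a h ->
  exists n, exec K S pol u x n (init_state R) = Done a h.
Proof. by rewrite /result; case: pselect => [e|//] E; exists (proj1_sig (cid e)). Qed.

Lemma exec_Done_inv pol u x n st a h : exec K S pol u x n st = Done a h ->
  all (fun b => b < K)%N (st_mem st) -> (size (st_mem st) <= S)%N ->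
  all (fun b => b < K)%N (pulls (st_hist st)) ->
  [/\ (a < K)%N, (0 < S)%N & all (fun b => b < K)%N (pulls h)].
Proof.
elim: n st => [|n IH] st //=.
case: (pol u (st_hist st)) => [b|b||b].
- case: ifP => // bm /IH + memK memS pullsK; apply=> //=.
  by rewrite pulls_rcons all_cat pullsK /= andbT; exact: (allP memK).
- case: ifP => // bm /IH + memK memS pullsK; apply=> //=.
  + by apply/allP => c /mem_rem; apply: (allP memK).
  + by rewrite size_rem // (leq_trans _ memS) // leq_pred.
  + by rewrite pulls_rcons cats0.
- case: ifP => // /andP[posK sizeS] /IH + memK memS pullsK; apply=> //=.
  + by rewrite -cats1 all_cat memK /= posK.
  + by rewrite size_rcons.
  + by rewrite pulls_rcons cats0.
- case: ifP => // bm [<- <-] memK memS pullsK; split=> //; first exact: (allP memK).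
  by case: (st_mem st) bm memS => // ? ? _; apply: leq_trans.
Qed.

Lemma result_Done_inv pol u x a h : result K S pol u x = Done a h ->
  [/\ (a < K)%N, (0 < S)%N & all (fun b => b < K)%N (pulls h)].
Proof. by move=> /result_exec [n /exec_Done_inv]; apply. Qed.

End Execution.

Lemma valid_alg_witness (R : realType) K S (pol : policy R) ok :
  valid_alg K S pol ok -> (0 < S)%N /\ exists n, ok n.
Proof.
move=> V; have h01 : 0 <= (0 : R) <= 1 by rewrite lexx ler01.
have [a [h [E okh]]] := V 0 (fun _ _ => 0) h01 (fun _ _ => h01).
by have [_ S0 _] := result_Done_inv E; split=> //; exists (size (pulls h)).
Qed.

Definition stop_arm (c : action) : option nat :=
  if c is AStop a then Some a else None.

Fixpoint first_some (f : nat -> option nat) (k n : nat) : option nat :=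
  if n is n'.+1 then (if f k is Some a then Some a else first_some f k.+1 n')
  else None.

Lemma first_some_skip f i d r :
  (forall l, (i <= l < i + d)%N -> f l = None) ->
  first_some f i (d + r) = first_some f (i + d) r.
Proof.
elim: d i => [|d IH] i fN; first by rewrite addn0.
rewrite addSn /= fN; last by rewrite leqnn addnS ltnS leq_addr.
rewrite IH ?addSn ?addnS // => l /andP[il li].
by apply: fN; rewrite (ltnW il) addnS -addSn.
Qed.

Definition stop_point (R : realType) (pol : policy R) (u : R)
    (h : seq (action * R)) : option nat :=
  first_some (fun k => stop_arm (pol u (take k h))) 0 (size h).+1.

(* A policy sees only its history, so [commit] recognizes the point where
   [pol] stops by replaying [pol] on every prefix of the history. *)
Definition commit (R : realType) (pol : policy R) (T : nat) : policy R :=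
  fun u h => match stop_point pol u h with
             | Some a => if (size (pulls h) < T)%N then APull a else AStop a
             | None => pol u h
             end.

Definition no_stop_before (R : realType) (pol : policy R) (u : R)
    (h : seq (action * R)) : Prop :=
  forall l, (l < size h)%N -> stop_arm (pol u (take l h)) = None.

Section Commit.
Variables (R : realType) (K S T : nat).
Implicit Types (pol : policy R) (u : R) (x : nat -> nat -> R).

Lemma stop_point_cat pol u (h e : seq (action * R)) :
  no_stop_before pol u h -> (e = [::] \/ exists a, pol u h = AStop a) ->
  stop_point pol u (h ++ e) = stop_arm (pol u h).
Proof.
move=> nsh He; rewrite /stop_point size_cat -addnS first_some_skip /=.
  rewrite add0n take_cat ltnn subnn take0 cats0.
  by case: He => [-> | [a ->]] //=; case: (stop_arm _).
by move=> l; rewrite add0n => lh; rewrite take_cat lh; exact: nsh.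
Qed.

Lemma commit_before_stop pol u h :
  no_stop_before pol u h -> stop_arm (pol u h) = None -> commit pol T u h = pol u h.
Proof.
by move=> nsh polh; rewrite /commit -[h]cats0 stop_point_cat ?cats0 ?polh //; left.
Qed.

Lemma no_stop_before_rcons pol u h p :
  no_stop_before pol u h -> stop_arm (pol u h) = None ->
  no_stop_before pol u (rcons h p).
Proof.
move=> nsh polh l; rewrite size_rcons ltnS leq_eqVlt -cats1 take_cat.
by case/orP=> [/eqP->|lh]; rewrite ?ltnn ?subnn ?take0 ?cats0 ?lh //; exact: nsh.
Qed.

Lemma commit_simulates pol u x n st a hf :
  no_stop_before pol u (st_hist st) -> exec K S pol u x n st = Done a hf ->
  exists k st',
    (forall m, exec K S (commit pol T) u x (k + m) st = exec K S (commit pol T) u x m st')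
    /\ [/\ st_hist st' = hf, no_stop_before pol u hf, pol u hf = AStop a
         & a \in st_mem st'].
Proof.
elim: n st => [|n IH] st nsh //=.
case E: (pol u (st_hist st)) => [b|b||b]; last first.
  by case: ifP => // bm [<- <-]; exists 0%N, st.
all: case: ifP => // bm /IH [|k [st' [sim Hst']]].
all: try by apply: no_stop_before_rcons; rewrite ?E.
all: exists k.+1, st'; split=> // m.
all: by rewrite addSn /= commit_before_stop ?E // bm sim.
Qed.

Lemma commit_pull_phase pol u x hf a j :
  no_stop_before pol u hf -> pol u hf = AStop a ->
  forall st e, st_hist st = hf ++ e -> a \in st_mem st ->
  (j + size (pulls (st_hist st)))%N = T ->
  exists h, exec K S (commit pol T) u x j.+1 st = Done a h /\
    pulls h = pulls (st_hist st) ++ nseq j a.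
Proof.
move=> nshf polhf; have commitE st e : st_hist st = hf ++ e ->
    commit pol T u (st_hist st) =
    if (size (pulls (st_hist st)) < T)%N then APull a else AStop a.
  by move=> he; rewrite /commit he stop_point_cat ?polhf //; right; exists a.
elim: j => [|j IH] st e he am hT /=; rewrite (commitE st e he).
  rewrite ifF /= ?am; last by rewrite -hT add0n ltnn.
  by exists (st_hist st); rewrite cats0.
rewrite ifT /= ?am; last by rewrite -hT addSn ltnS leq_addl.
set p := (APull a, x a (st_cnt st a)).
have [|//||h [E P]] := IH (State (st_mem st) (st_pos st)
  (fun c => if c == a then (st_cnt st a).+1 else st_cnt st c) (rcons (st_hist st) p))
  (rcons e p).
- by rewrite /= he rcons_cat.
- by rewrite /= pulls_rcons size_cat /= addn1 addnS.
by exists h; rewrite -E P pulls_rcons -catA.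
Qed.

Lemma commit_result pol u x a hf :
  result K S pol u x = Done a hf -> (size (pulls hf) <= T)%N ->
  exists h, result K S (commit pol T) u x = Done a h /\
    pulls h = pulls hf ++ nseq (T - size (pulls hf)) a.
Proof.
move=> /result_exec [n /(commit_simulates (st := init_state R))] [//|k [st' [sim]]].
move=> [hst' nshf polhf ast'] hfT.
have he : st_hist st' = hf ++ [::] by rewrite cats0.
have hT : (T - size (pulls hf) + size (pulls (st_hist st')))%N = T.
  by rewrite hst' subnK.
have [h [E P]] := commit_pull_phase x nshf polhf he ast' hT.
exists h; split; last by rewrite P hst'.
by apply: (exec_result (n := (k + (T - size (pulls hf)).+1)%N)); rewrite sim E.
Qed.

End Commit.

Section RunValue.
Variables (R : realType) (d : measure_display) (Omega : measurableType d)
  (P : probability Omega R) (K S T : nat) (D : nat -> probability R R)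
  (X : nat -> nat -> Omega -> R) (U : Omega -> R).
Hypothesis model : bandit_model P K D X U.
Implicit Types (pol : policy R) (ok : nat -> Prop).

Definition run_value pol (phi : nat -> seq nat -> R) (w : Omega) : R :=
  if run_at K S pol X U w is Done a h then phi a (pulls h) else 0.

Lemma run_Done pol ok : valid_alg K S pol ok -> forall w,
  exists a h, run_at K S pol X U w = Done a h /\ ok (size (pulls h)).
Proof.
case: model => _ _ X01 U01 _ V w.
have [a [h]] := V (U w) (fun i j => X i j w) (U01 w) (fun i j => X01 i j w).
by exists a, h.
Qed.

Lemma run_value_setE pol ok phi (A : set R) : valid_alg K S pol ok ->
  [set w | A (run_value pol phi w)] =
  [set w | exists a h, run_at K S pol X U w = Done a h /\ A (phi a (pulls h))].
Proof.
move=> V; apply/seteqP; split => w /=.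
  by rewrite /run_value; have [a [h [-> _]]] := run_Done V w; exists a, h.
by move=> [a [h [E Ah]]]; rewrite /run_value E.
Qed.

Lemma measurable_run_value pol ok phi : valid_alg K S pol ok ->
  alg_measurable K S pol X U -> measurable_fun setT (run_value pol phi).
Proof.
move=> V AM _ B mB; rewrite setTI /preimage (run_value_setE _ _ V).
pose F (p : nat * seq nat) : set Omega :=
  if asbool (B (phi p.1 p.2))
  then [set w | exists h, run_at K S pol X U w = Done p.1 h /\ pulls h = p.2]
  else set0.
have -> : [set w | exists a h, run_at K S pol X U w = Done a h /\ B (phi a (pulls h))]
    = \bigcup_p F p.
  apply/seteqP; split => w.
    by move=> [a [h [E Bh]]]; exists (a, pulls h) => //; rewrite /F asboolT //; exists h.
  move=> [[a s] _]; rewrite /F /=; case: asboolP => // Bs [h [E hs]].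
  by exists a, h; rewrite hs.
apply: countable_bigcupT_measurable; first exact: countableP.
by move=> [a s]; rewrite /F; case: asboolP => _ //; exact: AM.
Qed.

Lemma commit_measurable pol ok : valid_alg K S pol ok -> alg_measurable K S pol X U ->
  (forall n, ok n -> n <= T)%N -> alg_measurable K S (commit pol T) X U.
Proof.
move=> V AM okT a s.
pose F (s0 : seq nat) : set Omega :=
  if s0 ++ nseq (T - size s0) a == s
  then [set w | exists h, run_at K S pol X U w = Done a h /\ pulls h = s0]
  else set0.
have -> : [set w | exists h, run_at K S (commit pol T) X U w = Done a h /\ pulls h = s]
    = \bigcup_s0 F s0.
  apply/seteqP; split => w.
  - move=> [h [E hs]]; have [a' [h' [E' ok']]] := run_Done V w.
    have [h'' [E'' P'']] := commit_result E' (okT _ ok').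
    move: E; rewrite /run_at E'' => -[aa' hh'']; rewrite aa' in E' P''.
    by exists (pulls h') => //; rewrite /F -hs -hh'' P'' eqxx; exists h'.
  - move=> [s0 _]; rewrite /F; case: eqP => // <- [h [E <-]].
    have [a' [h' [E' ok']]] := run_Done V w.
    move: E'; rewrite E => -[_ hh']; rewrite -hh' in ok'.
    have [h'' [E'' P'']] := commit_result E (okT _ ok').
    by exists h''.
apply: countable_bigcupT_measurable; first exact: countableP.
by move=> s0; rewrite /F; case: eqP => _ //; exact: AM.
Qed.

End RunValue.

Lemma min_le_layers (R : realFieldType) (g eps : R) N : 0 < eps ->
  Num.min g (N.+1%:R * eps) <=
  eps * (1 + \sum_(c < N) ((c.+1%:R * eps < g)%R : bool)%:R).
Proof.
move=> e0; elim: N => [|N IH]; first by rewrite big_ord0 addr0 mulr1 mul1r ge_min lexx orbT.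
rewrite big_ord_recr /=; move: IH; set s := \sum_(_ < _) _ => IH.
have [ltg|leg] := ltP (N.+1%:R * eps) g.
  rewrite min_r in IH; last exact: ltW.
  rewrite ge_min -[N.+2]addn1 natrD mulr1n; apply/orP; right.
  by rewrite mulrDl mul1r addrA mulrDr mulr1 lerD2r.
rewrite min_l // in IH; rewrite min_l ?mulr0n ?addr0 //.
by rewrite (le_trans leg) // ler_pM2r // ler_nat.
Qed.

Lemma sum_half_pow (R : realFieldType) N :
  \sum_(c < N) (1 / 2 : R) ^+ c.+1 = 1 - (1 / 2) ^+ N.
Proof.
elim: N => [|N IH]; first by rewrite big_ord0 expr0 subrr.
rewrite big_ord_recr /= IH !exprS; move: (_ ^+ N) => y.
by rewrite mul1r [y in - y]splitr; ring.
Qed.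

Lemma regret_padE (R : comRingType) (f : nat -> R) (mu : R) (s : seq nat) a T :
  (size s <= T)%N ->
  T%:R * mu - \sum_(b <- s ++ nseq (T - size s) a) f b =
  \sum_(b <- s) (mu - f b) + (T - size s)%:R * (mu - f a).
Proof.
move=> sT; rewrite big_cat /= big_nseq iter_addr_0 sumrB big_const_seq count_predT.
rewrite iter_addr_0 -{1}(subnKC sT) natrD -[mu *+ _]mulr_natr -[f a *+ _]mulr_natr.
by ring.
Qed.

Section Expectation.
Variables (R : realType) (d : measure_display) (Omega : measurableType d)
  (P : probability Omega R) (g : Omega -> R).
Hypotheses (mg : measurable_fun setT g) (g01 : forall w, 0 <= g w <= 1).

Lemma expectation_le1 : (\int[P]_w (g w)%:E <= 1%:E)%E.
Proof.
have : (\int[P]_w (g w)%:E <= \int[P]_w (cst 1%E w))%E.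
  apply: ge0_le_integral => //; try by move=> w _; rewrite lee_fin; case/andP: (g01 w).
  exact/measurable_EFinP.
by move=> H; apply: le_trans H _; rewrite integral_cst // mul1e; exact: probability_le1.
Qed.

Lemma expectation_le_affine (r : Omega -> R) (a b Eg : R) :
  measurable_fun setT r -> 0 <= a -> 0 <= b ->
  (forall w, 0 <= r w <= a + b * g w) ->
  (\int[P]_w (g w)%:E <= Eg%:E)%E -> (\int[P]_w (r w)%:E <= (a + b * Eg)%:E)%E.
Proof.
move=> mr a0 b0 r_le Eg_ge.
have : (\int[P]_w (r w)%:E <= \int[P]_w (a%:E + b%:E * (g w)%:E))%E.
  apply: ge0_le_integral => //.
  - by move=> w _; rewrite lee_fin; case/andP: (r_le w).
  - exact/measurable_EFinP.
  - apply: emeasurable_funD => //; apply: emeasurable_funM => //.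
    exact/measurable_EFinP.
  - by move=> w _; rewrite -EFinM -EFinD lee_fin; case/andP: (r_le w).
move=> H; apply: le_trans H _.
rewrite ge0_integralD //; last 2 first.
- by move=> w _; rewrite mule_ge0 ?lee_fin //; case/andP: (g01 w).
- by apply: emeasurable_funM => //; exact/measurable_EFinP.
rewrite integral_cst // [X in (a%:E * X)%E](_ : _ = 1%E); last exact: probability_setT.
rewrite mule1 ge0_integralZl //; last 2 first.
- exact/measurable_EFinP.
- by move=> w _; rewrite lee_fin; case/andP: (g01 w).
by rewrite EFinD EFinM leeD2l // lee_wpmul2l // lee_fin.
Qed.

Lemma integral_le_indic_sum (f : Omega -> R) (a : R) (E : nat -> set Omega) N :
  measurable_fun setT f -> 0 <= a -> (forall c, measurable (E c)) ->
  (forall w, 0 <= f w <= a * (1 + \sum_(c < N) \1_(E c) w)) ->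
  (\int[P]_w (f w)%:E <= a%:E * (1 + \sum_(c < N) P (E c)))%E.
Proof.
move=> mf a0 mE f_le.
have mI c : measurable_fun setT (fun w => (a * \1_(E c) w)%:E).
  by apply/measurable_EFinP; apply: measurable_funM => //; exact: measurable_indic.
have I0 c w : (0 <= (a * \1_(E c) w)%:E)%E by rewrite lee_fin mulr_ge0.
have : (\int[P]_w (f w)%:E <=
        \int[P]_w (a%:E + \sum_(c < N) (a * \1_(E c) w)%:E))%E.
  apply: ge0_le_integral => //.
  - by move=> w _; rewrite lee_fin; case/andP: (f_le w).
  - exact/measurable_EFinP.
  - by apply: emeasurable_funD => //; exact: emeasurable_sum.
  move=> w _; rewrite sumEFin -EFinD lee_fin -mulr_sumr -{1}[a]mulr1 -mulrDr.
  by case/andP: (f_le w).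
move=> H; apply: le_trans H _; rewrite ge0_integralD //; first last.
- exact: emeasurable_sum.
- by move=> w _; apply: sume_ge0.
rewrite integral_cst // [X in (a%:E * X)%E](_ : _ = 1%E); last exact: probability_setT.
rewrite mule1 ge0_integral_sum //.
rewrite muleDr ?mule1 ?ge0_sume_distrr ?ge0_adde_def ?inE ?sume_ge0 //.
apply: leeD2l; apply: lee_sum => c _.
under eq_integral do rewrite EFinM.
rewrite ge0_integralZl ?integral_indic ?setIT ?lee_fin //.
exact/measurable_EFinP/measurable_indic.
Qed.

Lemma expectation_le_layers (eps Q : R) (q : nat -> R) : 0 < eps ->
  (forall c, P [set w | (c.+1%:R * eps < g w)%R] <= (q c)%:E)%E ->
  (forall N, \sum_(c < N) q c <= Q) ->
  (\int[P]_w (g w)%:E <= (eps * (1 + Q))%:E)%E.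
Proof.
move=> e0 tail sumQ.
have [N ltN] : exists N, eps^-1 < N.+1%:R by exists (Num.truncn eps^-1); exact: truncnS_gt.
pose E c := [set w | c.+1%:R * eps < g w].
have mE c : measurable (E c).
  have := mg measurableT (measurable_itv `](c.+1%:R * eps), +oo[).
  by rewrite setTI; congr measurable; apply/seteqP; split => w; rewrite /= in_itv /= andbT.
have g_le w : 0 <= g w <= eps * (1 + \sum_(c < N) \1_(E c) w).
  case/andP: (g01 w) => -> g1 /=.
  rewrite -[g w](@min_l _ _ _ (N.+1%:R * eps)); last first.
    by rewrite (le_trans g1) // ltW // -ltr_pdivrMr // div1r.
  apply: (le_trans (min_le_layers _ _ e0)); rewrite ler_pM2l // lerD2l.
  apply: ler_sum => c _; rewrite indicE.
  have [lt|_] := boolP (c.+1%:R * eps < g w)%R; last by rewrite ler0n.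
  by rewrite mem_set ?lexx.
apply: (le_trans (integral_le_indic_sum mg (ltW e0) mE g_le)).
rewrite EFinM; apply: lee_wpmul2l; first by rewrite lee_fin ltW.
rewrite EFinD leeD2l //; apply: le_trans (lee_sum _ (fun (c : 'I_N) _ => tail c)) _.
by rewrite sumEFin lee_fin; exact: sumQ.
Qed.

End Expectation.

Lemma mean_itv01 (R : realType) (Q : probability R R) :
  Q [set` `[0%R, 1%R]] = 1%E -> 0 <= mean Q <= 1.
Proof.
move=> Q01; pose f x : R := \1_`[0%R, 1%R] x * x.
have mf : measurable_fun setT f.
  by apply: measurable_funM; [exact: measurable_indic | exact: measurable_id].
have f01 x : 0 <= f x <= 1.
  rewrite /f indicE; case: (boolP (x \in _)) => [|_]; last by rewrite mul0r lexx ler01.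
  by rewrite inE /= in_itv /= mul1r.
have mean_f : (\int[Q]_x x%:E = \int[Q]_x (f x)%:E)%E.
  apply: ae_eq_integral => //; first exact/measurable_EFinP.
  exists (~` `[0%R, 1%R]); split; first exact: measurableC.
    by have := probability_setC Q (measurable_itv `[0%R, 1%R]); rewrite Q01 subee.
  by move=> x /= fx x01; apply: fx => _; rewrite /f indicE mem_set ?mul1r.
have I0 : (0 <= \int[Q]_x (f x)%:E)%E.
  by apply: integral_ge0 => x _; rewrite lee_fin; case/andP: (f01 x).
have I1 := expectation_le1 Q mf f01.
rewrite /mean mean_f; move: I0 I1; case: (\int[Q]_x _)%E => //= r.
by rewrite !lee_fin => -> ->.
Qed.

Section Means.
Variables (R : realType) (d : measure_display) (Omega : measurableType d)
  (P : probability Omega R) (K : nat) (D : nat -> probability R R)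
  (X : nat -> nat -> Omega -> R) (U : Omega -> R).
Hypothesis model : bandit_model P K D X U.

Lemma bandit_model_itv01 b : (b < K)%N -> D b [set` `[0%R, 1%R]] = 1%E.
Proof.
move=> bK; case: model => _ _ X01 _ indep.
have := indep [:: (b, 0%N)] (fun _ => [set` `[0%R, 1%R]]) setT erefl.
rewrite /= bK => /(_ erefl measurableT (fun _ => measurable_itv _)).
have -> : U @^-1` setT `&` \bigcap_(p in [set q | q \in [:: (b, 0%N)]])
    X p.1 p.2 @^-1` [set` `[0%R, 1%R]] = setT.
  by apply/seteqP; split => // w _; split => // p _ /=; rewrite in_itv /= X01.
rewrite setTI lebesgue_measure_itv /= lte_fin ltr01 big_cons big_nil mule1.
by rewrite oppr0 adde0 probability_setT mul1e.
Qed.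

Lemma bandit_mean01 b : (b < K)%N -> 0 <= mean (D b) <= 1.
Proof. by move=> bK; apply: mean_itv01; exact: bandit_model_itv01. Qed.

Lemma le_mean_mustar b : (b < K)%N -> mean (D b) <= mustar K D.
Proof. by move=> bK; exact: (le_bigmax _ (fun i : 'I_K => mean (D i)) (Ordinal bK)). Qed.

Lemma mustar_le1 : mustar K D <= 1.
Proof. by apply: bigmax_le => // i _; case/andP: (bandit_mean01 (ltn_ord i)). Qed.

Lemma gap01 b : (b < K)%N -> 0 <= mustar K D - mean (D b) <= 1.
Proof.
move=> bK; have := le_mean_mustar bK; have := mustar_le1.
case/andP: (bandit_mean01 bK); lra.
Qed.

End Means.

Definition gap (R : realType) K (D : nat -> probability R R) (a : nat) (_ : seq nat) : R :=
  mustar K D - mean (D a).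

Definition commit_regret (R : realType) K T (D : nat -> probability R R)
    (a : nat) (s : seq nat) : R :=
  T%:R * mustar K D - \sum_(b <- s ++ nseq (T - size s) a) mean (D b).

Lemma natr_le_leq (R : numDomainType) (L : R) n T :
  n%:R <= L -> L <= T%:R -> (n <= T)%N.
Proof. by move=> nL LT; rewrite -(ler_nat R); exact: le_trans LT. Qed.

Section CommitRegret.
Variables (R : realType) (d : measure_display) (Omega : measurableType d)
  (P : probability Omega R) (K S T : nat) (D : nat -> probability R R)
  (X : nat -> nat -> Omega -> R) (U : Omega -> R).
Hypothesis model : bandit_model P K D X U.
Variables (pol : policy R) (L : R).
Hypotheses (V : valid_alg K S pol (fun n => n%:R <= L)) (LT : L <= T%:R).

Let gap_run := run_value K S X U pol (gap K D).
Let regret_run := regret_at K S T (commit pol T) D X U.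

Lemma regret_at_commit : regret_run =1 run_value K S X U pol (commit_regret K T D).
Proof.
move=> w; rewrite /regret_run /regret_at /run_value.
have [a [hf [E /natr_le_leq/(_ LT) hfT]]] := run_Done model V w.
by have [h [E' P']] := commit_result E hfT; rewrite E /run_at E' P'.
Qed.

Lemma sum_gap_le_size (s : seq nat) : all (fun b => b < K)%N s ->
  0 <= \sum_(b <- s) (mustar K D - mean (D b)) <= (size s)%:R.
Proof.
elim: s => [|b s IH] /=; first by rewrite big_nil lexx.
case/andP=> /(gap01 model) /andP[g0 g1] /IH /andP[s0 s1].
by rewrite big_cons -addn1 natrD addrC; apply/andP; split; [exact: addr_ge0 | exact: lerD].
Qed.

Lemma gap_run01 w : 0 <= gap_run w <= 1.
Proof.
rewrite /gap_run /run_value; have [a [h [E _]]] := run_Done model V w.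
by rewrite E; have [aK _ _] := result_Done_inv E; exact: (gap01 model aK).
Qed.

Lemma regret_run_le w : 0 <= regret_run w <= L + T%:R * gap_run w.
Proof.
rewrite regret_at_commit /gap_run /run_value; have [a [hf [E hfL]]] := run_Done model V w.
rewrite E /commit_regret /gap regret_padE ?(natr_le_leq hfL LT) //.
have [aK _ sK] := result_Done_inv E; case/andP: (sum_gap_le_size sK) => s0 sL.
case/andP: (gap01 model aK) => ga0 _.
have TsT : (T - size (pulls hf))%:R <= T%:R :> R by rewrite ler_nat leq_subr.
apply/andP; split; first by rewrite addr_ge0 ?mulr_ge0.
by rewrite lerD ?(le_trans sL) // ler_wpM2r.
Qed.

Lemma commit_expected_regret (Eg : R) : alg_measurable K S pol X U ->
  (\int[P]_w (gap_run w)%:E <= Eg%:E)%E ->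
  (\int[P]_w (regret_run w)%:E <= (L + T%:R * Eg)%:E)%E.
Proof.
move=> AM; have [_ [n nL]] := valid_alg_witness V.
apply: expectation_le_affine regret_run_le => //.
- exact: (measurable_run_value model (gap K D) V AM).
- exact: gap_run01.
- rewrite (funext regret_at_commit).
  exact: (measurable_run_value model (commit_regret K T D) V AM).
- exact: le_trans nL.
Qed.

End CommitRegret.

Section Guarantees.
Variables (R : realType) (K S T : nat).

Lemma regret_guarantee_le (B B' : R) pol : B <= B' ->
  regret_guarantee K S T B pol -> regret_guarantee K S T B' pol.
Proof.
move=> BB' [V G]; split=> // d Omega P D X U model.
by have [AM I] := G d Omega P D X U model; split=> //; rewrite (le_trans I) ?lee_fin.
Qed.

Lemma commit_regret_guarantee (pol : policy R) (L Eg : R) :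
  valid_alg K S pol (fun n => n%:R <= L) -> L <= T%:R ->
  (forall d (Omega : measurableType d) (P : probability Omega R) D X U,
     bandit_model P K D X U -> alg_measurable K S pol X U /\
     (\int[P]_w (run_value K S X U pol (gap K D) w)%:E <= Eg%:E)%E) ->
  regret_guarantee K S T (L + T%:R * Eg) (commit pol T).
Proof.
move=> V LT gapE; have le_T n : n%:R <= L -> (n <= T)%N by move/natr_le_leq; apply.
split=> [u x u01 x01 | d Omega P D X U model].
  have [a [hf [E /le_T hfT]]] := V u x u01 x01.
  have [h [E' P']] := commit_result E hfT.
  by exists a, h; rewrite P' size_cat size_nseq subnKC.
have [AM Eg_ge] := gapE d Omega P D X U model; split.
  exact: (commit_measurable model V AM le_T).
exact: (commit_expected_regret model V LT AM Eg_ge).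
Qed.

Lemma pe_commit_regret_guarantee (M eps : R) (pol : policy R) :
  0 < eps -> M / eps ^+ 2 <= T%:R -> pe_guarantee K S M eps pol ->
  regret_guarantee K S T (M / eps ^+ 2 + T%:R * (eps * (1 + 1 / 10))) (commit pol T).
Proof.
move=> e0 LT [V G]; apply: commit_regret_guarantee => // d Omega P D X U model.
have [AM tail] := G d Omega P D X U model; split=> //.
apply: (expectation_le_layers _ _ e0 (q := fun c => (1 / 2) ^+ c.+1 / 10)).
- exact: (measurable_run_value model (gap K D) V AM).
- exact: (gap_run01 model V).
- move=> c; rewrite (run_value_setE model (gap K D) (fun r => (c.+1%:R * eps < r)%R) V) /gap.
  rewrite [Z in P Z](_ : _ = [set w | exists a h, run_at K S pol X U w = Done a h /\
    (mean (D a) < mustar K D - c.+1%:R * eps)%R]); first exact: tail.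
  by apply/seteqP; split=> w [a [h [E lt]]]; exists a, h; split=> //; lra.
- by move=> N; rewrite -mulr_suml sum_half_pow ler_pM2r // gerBl exprn_ge0.
Qed.

Definition first_arm : policy R := fun _ h => if h is [::] then ARead else AStop 0.

Lemma first_arm_result u x : (0 < K)%N -> (0 < S)%N ->
  result K S first_arm u x = Done 0 [:: (ARead, 0)].
Proof. by move=> K0 S0; apply: (exec_result (n := 2)); rewrite /= K0 S0. Qed.

Lemma first_arm_regret_guarantee : (0 < K)%N -> (0 < S)%N ->
  regret_guarantee K S T T%:R (commit first_arm T).
Proof.
move=> K0 S0; have V : valid_alg K S first_arm (fun n => n%:R <= 0 :> R).
  by move=> u x _ _; exists 0%N, [:: (ARead, 0)]; rewrite first_arm_result.
apply: regret_guarantee_le (commit_regret_guarantee (Eg := 1) V (ler0n _ _) _).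
  by rewrite add0r mulr1.
move=> d Omega P D X U model.
have AM : alg_measurable K S first_arm X U.
  move=> a s; set Q := exists h, Done 0 [:: (ARead, 0 : R)] = Done a h /\ pulls h = s.
  rewrite (_ : [set w | _] = [set _ | Q]); last first.
    by apply/seteqP; split=> w; rewrite /= /run_at first_arm_result.
  have [q|nq] := pselect Q.
    by rewrite (_ : [set _ | Q] = setT) //; apply/seteqP; split.
  by rewrite (_ : [set _ | Q] = set0) //; apply/seteqP; split.
split=> //; apply: expectation_le1.
- exact: (measurable_run_value model (gap K D) V AM).
- exact: (gap_run01 model V).
Qed.

End Guarantees.

Lemma powR_third (R : realType) (x : R) n : 0 <= x ->
  x `^ (n%:R / 3) = (x `^ (1 / 3)) ^+ n.
Proof. by move=> x0; rewrite -powR_mulrn ?powR_ge0 // -powRrM mul1r mulrC. Qed.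

Unset Implicit Arguments.

Theorem lemma5p1 (R : realType) :
  exists C : R, 0 < C /\
  forall (K T S : nat) (M : R) (ALG : R -> policy R),
    (0 < K)%N -> (K < T)%N ->
    (forall eps : R, 0 < eps < 1 -> pe_guarantee K S M eps (ALG eps)) ->
    exists ALG' : policy R,
      regret_guarantee K S T
        (C * (M * (T%:R `^ (2 / 3)) / (K%:R `^ (2 / 3))
              + (K%:R `^ (1 / 3)) * (T%:R `^ (2 / 3)))) ALG'.
Proof.
exists 2; split=> // K T S M ALG K0 KT HALG.
rewrite !powR_third ?ler0n //; set k := K%:R `^ _; set t := T%:R `^ _.
have k0 : 0 < k by apply: powR_gt0; rewrite ltr0n.
have kt : k < t by apply: gt0_ltr_powR; rewrite ?nnegrE ?ler0n ?ltr_nat.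
have t3 : T%:R = t ^+ 3 by rewrite -powR_third ?ler0n // divff ?powRr1 ?ler0n.
have t0 : 0 < t := lt_trans k0 kt.
have e01 : 0 < k / t < 1 by rewrite divr_gt0 // ltr_pdivrMr // mul1r.
set eps := k / t in e01 *; have [e0 _] := andP e01.
have [V _] := HALG eps e01; have [S0 [n nL]] := valid_alg_witness V.
have L0 : 0 <= M / eps ^+ 2 := le_trans (ler0n _ n) nL.
have Teps : T%:R * eps = k * t ^+ 2 by rewrite t3 /eps; field; rewrite gt_eqF.
have Leps : M / eps ^+ 2 = M * t ^+ 2 / k ^+ 2 by rewrite /eps; field; rewrite !gt_eqF.
have kt2 : 0 <= k * t ^+ 2 by rewrite mulr_ge0 ?exprn_ge0 // ltW.
case: (leP (M / eps ^+ 2) T%:R) => LT.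
  exists (commit (ALG eps) T).
  apply: regret_guarantee_le (pe_commit_regret_guarantee e0 LT (HALG eps e01)).
  by rewrite mulrA Teps -Leps; lra.
exists (commit (@first_arm R) T); apply: regret_guarantee_le (first_arm_regret_guarantee R T K0 S0).
by rewrite -Leps; lra.
Qed.
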